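(* $\mathfrak{ss}_c^{ui}=\mathfrak d$ and $(\mathfrak{ss}_c^{ui})^\perp=\mathfrak b$.
   Context: Let $\mathfrak S$ be the set of all sequences $\mathbf a=\langle a_i:i\in\omega\rangle$ of rational numbers with $a_i\to0$. For infinite $X\subseteq\omega$ with increasing enumeration $\langle i_n\rangle$, $\sum_X\mathbf a$ denotes $\sum_n a_{i_n}$; $[\omega]^\omega_\omega$ is the set of infinite coinfinite subsets of $\omega$. A series tends to infinity if its partial sums tend to $+\infty$ or to $-\infty$; it is conditional if the sum of its positive terms is $+\infty$ and the sum of its negative terms is $-\infty$; it tends unconditionally to infinity if it tends to infinity and is not conditional. Let $\mathfrak S_{ui}$ be the set of $\mathbf a\in\mathfrak S$ with $\sum\mathbf a$ tending unconditionally to infinity. $\mathfrak{ss}_c^{ui}$ is the least cardinality of $\mathcal X\subseteq[\omega]^\omega_\omega$ such that every $\mathbf a\in\mathfrak S_{ui}$ has some $X\in\mathcal X$ with $\sum_X\mathbf a$ convergent (to a real number); $(\mathfrak{ss}_c^{ui})^\perp$ is the least cardinality of $\mathcal A\subseteq\mathfrak S_{ui}$ such that no $X\in[\omega]^\omega_\omega$ makes $\sum_X\mathbf a$ convergent for all $\mathbf a\in\mathcal A$. $\mathfrak b$, $\mathfrak d$ are the bounding and dominating numbers. *)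

From HB Require Import structures.
From mathcomp Require Import all_boot all_order all_algebra.
From mathcomp Require Import boolp classical_sets functions cardinality reals topology normedtype sequences.
Set Implicit Arguments. Unset Strict Implicit. Unset Printing Implicit Defensive.
Import Order.TTheory GRing.Theory Num.Theory.
Import numFieldNormedType.Exports.
Local Open Scope classical_set_scope.
Local Open Scope ring_scope.

Definition rseq := nat -> rat.

Definition tends_to_zero (a : rseq) : Prop :=
  forall e : rat, 0 < e -> exists N, forall n, (N <= n)%N -> `|a n| < e.

Definition psum (a : rseq) (m : nat) : rat := \sum_(i < m) a i.

(* partial sums of the subseries sum_X a: sum of the a_i with i < m and i in X
   (a re-indexing-free description of the partial sums of sum_n a_{i_n}) *)
Definition psumX (X : set nat) (a : rseq) (m : nat) : rat :=
  \sum_(i < m | `[< X i >]) a i.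

Definition tends_pinfty (s : nat -> rat) : Prop :=
  forall M : rat, exists N, forall n, (N <= n)%N -> M < s n.
Definition tends_minfty (s : nat -> rat) : Prop :=
  forall M : rat, exists N, forall n, (N <= n)%N -> s n < M.

Definition series_tends_infty (a : rseq) : Prop :=
  tends_pinfty (psum a) \/ tends_minfty (psum a).

Definition series_conditional (a : rseq) : Prop :=
  tends_pinfty (psum (fun i => Num.max (a i) 0)) /\
  tends_minfty (psum (fun i => Num.min (a i) 0)).

Definition S_ui (a : rseq) : Prop :=
  tends_to_zero a /\ series_tends_infty a /\ ~ series_conditional a.

Definition inf_coinf (X : set nat) : Prop :=
  infinite_set X /\ infinite_set (~` X).

Definition subseries_converges (R : realType) (X : set nat) (a : rseq) : Prop :=
  exists l : R, ((fun m => ratr (psumX X a m)) : nat -> R) @ \oo --> l.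

Definition ss_family (R : realType) (XX : set (set nat)) : Prop :=
  XX `<=` inf_coinf /\
  forall a, S_ui a -> exists2 X, XX X & subseries_converges R X a.

Definition ss_perp_family (R : realType) (A : set rseq) : Prop :=
  A `<=` S_ui /\
  ~ (exists X, inf_coinf X /\ forall a, A a -> subseries_converges R X a).

Definition le_star (f g : nat -> nat) : Prop :=
  exists N, forall n, (N <= n)%N -> (f n <= g n)%N.

Definition dominating_family (D : set (nat -> nat)) : Prop :=
  forall f, exists2 g, D g & le_star f g.

Definition unbounded_family (B : set (nat -> nat)) : Prop :=
  forall g, exists2 f, B f & ~ le_star f g.

(* min{|P| : P holds} = min{|Q| : Q holds} (cardinals are well ordered under
   choice, so equality of the minima is the conjunction of these two
   comparisons) *)
Definition same_min_card T U (P : set T -> Prop) (Q : set U -> Prop) : Prop :=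
  (forall B, Q B -> exists2 A, P A & (A #<= B)%card) /\
  (forall A, P A -> exists2 B, Q B & (B #<= A)%card).

(* Both equalities come from four maps between functions and sets or
   sequences that transport the relevant families.  To a sequence a -> 0
   attach the decay index f_a, with |a_i| < 2^-n beyond f_a(n); to g attach
   the infinite coinfinite set X_g of even numbers whose k-th element is at
   least g(k).  If f_a <=* g then the sum of |a| over X_g is dominated by a
   geometric series, so it converges.  Conversely, to f attach the positive
   divergent sequence a_f equal to 1/(n+1) on the n-th block of a partition of
   omega into blocks ending at t_n >= f(n), and to an infinite X a point g_X(n)
   below which X has (n+1)^2 elements.  If f(n) > g_X(n), the partial sum of
   a_f over X up to t_n is at least n+1; so convergence forces f <=* g_X. *)

From HB Require Import structures.
From mathcomp Require Import all_boot all_order all_algebra.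
From mathcomp Require Import boolp classical_sets functions cardinality reals topology normedtype sequences.
From mathcomp Require Import finmap zify lra.
Set Implicit Arguments. Unset Strict Implicit. Unset Printing Implicit Defensive.
Import Order.TTheory GRing.Theory Num.Theory.
Import numFieldNormedType.Exports.
Local Open Scope classical_set_scope.
Local Open Scope ring_scope.

Lemma exists_nat_gt (T : archiRealFieldType) (x : T) : exists n : nat, x < n%:R.
Proof.
case: (lerP x 0) => h; first by exists 1%N; apply: (le_lt_trans h).
by exists (Num.Def.archi_bound x); apply: archi_boundP; apply: ltW.
Qed.

Lemma sum_ltn_ord (k n : nat) : (\sum_(j < k) (j < n)%N)%N = minn k n.
Proof.
elim: k => [|k IH]; first by rewrite big_ord0 min0n.
by rewrite big_ord_recr /= IH; case: (ltnP k n) => h /=; lia.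
Qed.

Lemma ler_sum_ord_widen (T : numDomainType) (F : nat -> T) (P : pred nat) m m' :
  (forall i, 0 <= F i) -> (m <= m')%N ->
  \sum_(i < m | P i) F i <= \sum_(i < m' | P i) F i.
Proof.
move=> F0 mm; rewrite (big_ord_widen_cond m' P F mm).
rewrite [X in _ <= X](bigID (fun i : 'I_m' => (i < m)%N)) /= lerDl.
by apply: sumr_ge0 => i _.
Qed.

Lemma ler_sum_ord_truncated (T : numDomainType) (F : nat -> T) (P : pred nat) k m :
  (forall i, 0 <= F i) ->
  \sum_(i < m | P i) (if (i < k)%N then F i else 0) <= \sum_(i < k) F i.
Proof.
move=> F0; pose G i := if (i < k)%N then F i else 0.
have G0 i : 0 <= G i by rewrite /G; case: ifP.
apply: (@le_trans _ _ (\sum_(i < maxn m k) G i)).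
  rewrite [X in X <= _]big_mkcond.
  apply: (le_trans _ (ler_sum_ord_widen xpredT G0 (leq_maxl m k))).
  by apply: ler_sum => i _; case: (P i).
by rewrite (big_ord_widen (maxn m k) F (leq_maxr m k)) [X in _ <= X]big_mkcond.
Qed.

Lemma infinite_nat_setP (X : set nat) :
  infinite_set X <-> forall m, exists i, (m <= i)%N /\ X i.
Proof.
split=> [hX m|h].
  apply: contrapT => h; apply: hX.
  apply: (@sub_finite_set _ _ `I_m); last exact: finite_II.
  by move=> i Xi /=; rewrite ltnNge; apply/negP => mi; apply: h; exists i.
move=> /finite_fsetP[B hB].
have [i [hi Xi]] := h (\max_(x <- B) x).+1.
have : i \in B by move: Xi; rewrite hB.
move=> /(fun H => @leq_bigmax_seq _ (enum_fset B) xpredT id i H isT) /=.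
by move: hi; rewrite ltnNge => /negP.
Qed.

Section BlockHarmonic.
Variable f : nat -> nat.

Definition block_end (n : nat) : nat := ((n.+1)^2 + \sum_(k < n.+1) f k)%N.

Lemma block_end_mono : {homo block_end : m n / (m <= n)%N}.
Proof.
move=> m n mn; rewrite /block_end leq_add ?leq_exp2r //.
by rewrite -(subnKC mn) -addSn big_split_ord /= leq_addr.
Qed.

Lemma block_end_gt n : (n < block_end n)%N.
Proof. rewrite /block_end; nia. Qed.

Lemma block_end_ge n : (f n <= block_end n)%N.
Proof. rewrite /block_end big_ord_recr /=; lia. Qed.

(* the least n with i < block_end n *)
Definition block_index (i : nat) : nat := (\sum_(n < i.+1) (block_end n <= i))%N.

Lemma block_index_le i n : (i < block_end n)%N -> (block_index i <= n)%N.
Proof.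
move=> h; rewrite /block_index (@leq_trans (\sum_(j < i.+1) (j < n)%N)) //.
  apply: leq_sum => j _; case: (leqP (block_end j) i) => //= hj.
  rewrite lt0b ltnNge; apply/negP => nj.
  by have := block_end_mono nj; lia.
by rewrite sum_ltn_ord geq_minr.
Qed.

Lemma block_index_gt i n : (block_end n <= i)%N -> (n < block_index i)%N.
Proof.
move=> h; rewrite /block_index (@leq_trans (\sum_(j < i.+1) (j < n.+1)%N)) //.
  by rewrite sum_ltn_ord; have := block_end_gt n; lia.
apply: leq_sum => j _; case: (ltnP j n.+1) => //=; rewrite ltnS => hj.
by rewrite lt0b (leq_trans (block_end_mono hj)).
Qed.

Definition block_harmonic : rseq := fun i => 1 / (block_index i).+1%:R.

Lemma block_harmonic_ge0 i : 0 <= block_harmonic i.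
Proof. by rewrite /block_harmonic divr_ge0. Qed.

Lemma block_harmonic_lb i n : (i < block_end n)%N -> 1 / n.+1%:R <= block_harmonic i.
Proof.
move=> h; rewrite /block_harmonic !div1r lef_pV2 ?posrE ?ltr0n // ler_nat ltnS.
exact: block_index_le.
Qed.

Lemma block_harmonic_ub i n : (block_end n <= i)%N -> block_harmonic i <= 1 / n.+2%:R.
Proof.
move=> h; rewrite /block_harmonic !div1r lef_pV2 ?posrE ?ltr0n // ler_nat ltnS.
exact: block_index_gt.
Qed.

Lemma block_harmonic_sum_ge n (P : pred nat) :
  (\sum_(i < block_end n | P i) 1%N)%:R / n.+1%:R <=
  \sum_(i < block_end n | P i) block_harmonic i.
Proof.
rewrite natr_sum mulr_suml; apply: ler_sum => i _.
by rewrite mul1r -div1r; apply: block_harmonic_lb.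
Qed.

Lemma S_ui_block_harmonic : S_ui block_harmonic.
Proof.
split; [|split].
- move=> e e0; have [n hn] := exists_nat_gt e^-1.
  exists (block_end n) => i hi; rewrite ger0_norm ?block_harmonic_ge0 //.
  apply: (le_lt_trans (block_harmonic_ub hi)).
  rewrite div1r -(invrK e) ltf_pV2 ?posrE ?invr_gt0 ?ltr0n //.
  by apply: (lt_trans hn); rewrite ltr_nat.
- left => M; have [n hn] := exists_nat_gt M.
  exists (block_end n) => m hm; apply: (lt_le_trans hn).
  apply: (le_trans _ (ler_sum_ord_widen xpredT block_harmonic_ge0 hm)).
  apply: (le_trans _ (block_harmonic_sum_ge n xpredT)).
  rewrite sum1_card card_ord ler_pdivlMr ?ltr0n // -natrM ler_nat /block_end; nia.
- case=> _ h; have [N hN] := h 0; have := hN N (leqnn N).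
  rewrite /psum big1 ?ltxx // => i _.
  by apply/min_idPr; apply: block_harmonic_ge0.
Qed.

End BlockHarmonic.

Definition count_below (X : set nat) (m : nat) : nat := (\sum_(i < m | `[< X i >]) 1)%N.

Lemma count_below_mono X : {homo count_below X : m m' / (m <= m')%N}.
Proof.
move=> m m' mm; rewrite /count_below (big_ord_widen_cond m' (fun i => `[< X i >]) (fun _ => 1%N) mm).
by rewrite [X in (_ <= X)%N](bigID (fun i : 'I_m' => (i < m)%N)) /= leq_addr.
Qed.

Lemma count_below_unbounded X : infinite_set X -> forall k, exists m, (k <= count_below X m)%N.
Proof.
move=> /infinite_nat_setP hX; elim=> [|k [m hm]]; first by exists 0%N.
have [i [mi Xi]] := hX m.
exists i.+1; rewrite /count_below big_mkcond big_ord_recr /= asboolT // -big_mkcond.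
by rewrite -/(count_below X i) addn1 ltnS (leq_trans hm) // count_below_mono.
Qed.

Definition square_count_point (X : set nat) (n : nat) : nat :=
  xget 0%N [set m | ((n.+1)^2 <= count_below X m)%N].

Lemma square_count_pointP X n : infinite_set X ->
  ((n.+1)^2 <= count_below X (square_count_point X n))%N.
Proof.
move=> hX; apply: (@xgetPex _ 0%N [set m | ((n.+1)^2 <= count_below X m)%N]).
exact: count_below_unbounded.
Qed.

Lemma subseries_converges_ubound (R : realType) X a :
  subseries_converges R X a -> exists N : nat, forall m, psumX X a m < N%:R.
Proof.
move=> [l /cvgP /cvg_seq_bounded /bounded_fun_has_ubound [M hM]].
have [N hN] := exists_nat_gt M.
exists N => m; rewrite -(ltr_rat R) ratr_nat (le_lt_trans _ hN) //.
by apply: hM; exists m.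
Qed.

Lemma le_star_square_count_point (R : realType) X f :
  infinite_set X -> subseries_converges R X (block_harmonic f) ->
  le_star f (square_count_point X).
Proof.
move=> hX /subseries_converges_ubound [N hN].
exists N => n Nn; rewrite leqNgt; apply/negP => hlt.
have hcount : ((n.+1)^2 <= count_below X (block_end f n))%N.
  apply: leq_trans (square_count_pointP n hX) _; apply: count_below_mono.
  exact: ltnW (leq_trans hlt (block_end_ge f n)).
have : n.+1%:R <= psumX X (block_harmonic f) (block_end f n).
  apply: (le_trans _ (block_harmonic_sum_ge f n (fun i => `[< X i >]))).
  rewrite -/(count_below X (block_end f n)) ler_pdivlMr ?ltr0n // -natrM ler_nat.
  by move: hcount; rewrite expnS expn1.
apply/negP; rewrite -ltNge (lt_trans (hN _)) // ltr_nat; lia.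
Qed.

Lemma subseries_converges_abs_bounded (R : realType) (X : set nat) (a : rseq) (M : rat) :
  (forall m, \sum_(i < m | `[< X i >]) `|a i| <= M) -> subseries_converges R X a.
Proof.
move=> hM; rewrite /subseries_converges; pose b i := if `[< X i >] then a i else 0.
have -> : (fun m => (ratr (psumX X a m) : R)) = series (fun i => ratr (b i)).
  apply: funext => m; rewrite seriesEord /psumX rmorph_sum big_mkcond /=.
  by apply: eq_bigr => i _; rewrite /b; case: `[< X i >]; rewrite ?rmorph0.
apply/cvg_ex; apply: normed_cvg; apply: nondecreasing_is_cvgn.
  move=> m n mn; rewrite /normed_series_of seriesEnat /=.
  by apply: (@nondecreasing_series _ _ xpredT 0%N) => // k _ _.
exists (ratr M) => _ [n _ <-].
rewrite /normed_series_of seriesEord /=.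
have -> : \sum_(i < n) `|(ratr (b i) : R)| = ratr (\sum_(i < n | `[< X i >]) `|a i|).
  rewrite rmorph_sum [RHS]big_mkcond /=; apply: eq_bigr => i _.
  by rewrite -ratr_norm /b; case: `[< X i >]; rewrite ?normr0 ?rmorph0.
by rewrite ler_rat.
Qed.

Section SparseSet.
Variable g : nat -> nat.

(* [sparse_rank i] counts the members of [sparse_set] below [i], so the k-th
   member is an even number at least [g k]. *)
Fixpoint sparse_rank (i : nat) : nat :=
  if i is j.+1 then (sparse_rank j + (~~ odd j && (g (sparse_rank j) <= j)))%N else 0%N.

Definition sparse_mem (i : nat) : bool := ~~ odd i && (g (sparse_rank i) <= i)%N.

Definition sparse_set : set nat := [set i | sparse_mem i].

Lemma sparse_rankS i : sparse_rank i.+1 = (sparse_rank i + sparse_mem i)%N.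
Proof. by []. Qed.

Lemma sparse_rank_mono : {homo sparse_rank : i j / (i <= j)%N}.
Proof.
move=> i j /subnKC <-; elim: (j - i)%N => [|k IH]; first by rewrite addn0.
by rewrite addnS sparse_rankS (leq_trans IH) ?leq_addr.
Qed.

Lemma sparse_mem_unbounded i : exists j, (i <= j)%N /\ sparse_mem j.
Proof.
apply: contrapT => H.
have rank_const k : sparse_rank (i + k) = sparse_rank i.
  elim: k => [|k IH]; first by rewrite addn0.
  rewrite addnS sparse_rankS IH; case h: (sparse_mem (i + k)); last by rewrite addn0.
  by exfalso; apply: H; exists (i + k)%N; rewrite leq_addr h.
apply: H; exists ((i + g (sparse_rank i)).*2)%N; split; first by rewrite -addnn; lia.
rewrite /sparse_mem odd_double /= -[X in sparse_rank X](addKn i) -addnBA.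
  by rewrite rank_const; lia.
by rewrite -addnn; lia.
Qed.

Lemma inf_coinf_sparse_set : inf_coinf sparse_set.
Proof.
split; apply/infinite_nat_setP => m; first exact: sparse_mem_unbounded.
by exists m.*2.+1; split; [lia | rewrite /sparse_set /= /sparse_mem /= odd_double].
Qed.

Lemma sparse_rank_unbounded k : exists i, (k <= sparse_rank i)%N.
Proof.
elim: k => [|k [i hi]]; first by exists 0%N.
have [j [ij mj]] := sparse_mem_unbounded i.
by exists j.+1; rewrite sparse_rankS mj addn1 ltnS (leq_trans hi) // sparse_rank_mono.
Qed.

Lemma sparse_geometric_sum m :
  \sum_(i < m | sparse_mem i) (1/2 : rat)^+(sparse_rank i) + 2 * (1/2)^+(sparse_rank m) = 2.
Proof.
elim: m => [|m IH]; first by rewrite big_ord0 /= expr0 add0r mulr1.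
rewrite sparse_rankS big_mkcond big_ord_recr -big_mkcond /=.
case: (sparse_mem m) => /=; last by rewrite addr0 addn0.
by rewrite addn1 exprS; move: IH; lra.
Qed.

End SparseSet.

Definition decay_index (a : rseq) (n : nat) : nat :=
  xget 0%N [set N | forall i, (N <= i)%N -> `|a i| < (1/2 : rat)^+n].

Lemma decay_indexP a : tends_to_zero a ->
  forall n i, (decay_index a n <= i)%N -> `|a i| < (1/2 : rat)^+n.
Proof.
move=> ha n; apply: (@xgetPex _ 0%N [set N | forall i, (N <= i)%N -> `|a i| < (1/2 : rat)^+n]).
by apply: ha; apply: exprn_gt0.
Qed.

Lemma sparse_abs_sum_bounded g a N k :
  tends_to_zero a -> (forall n, (N <= n)%N -> (decay_index a n <= g n)%N) ->
  (N <= sparse_rank g k)%N ->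
  forall m, \sum_(i < m | sparse_mem g i) `|a i| <= 2 + \sum_(i < k) `|a i|.
Proof.
move=> ha hN hk m.
apply: (@le_trans _ _ (\sum_(i < m | sparse_mem g i)
   ((1/2 : rat)^+(sparse_rank g i) + (if (i < k)%N then `|a i| else 0)))).
  apply: ler_sum => i /andP[_ gi]; case: (ltnP i k) => h.
    by rewrite lerDr exprn_ge0.
  rewrite addr0 ltW // decay_indexP // (leq_trans (hN _ _)) //.
  exact: leq_trans hk (sparse_rank_mono g h).
rewrite big_split /=; apply: lerD; last by apply: (ler_sum_ord_truncated (F := fun i => `|a i|)) => i.
have := sparse_geometric_sum g m.
have : 0 <= 2 * (1/2 : rat)^+(sparse_rank g m) by rewrite mulr_ge0 ?exprn_ge0.
lra.
Qed.

Lemma sparse_subseries_converges (R : realType) g a :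
  tends_to_zero a -> le_star (decay_index a) g -> subseries_converges R (sparse_set g) a.
Proof.
move=> ha [N hN]; have [k hk] := sparse_rank_unbounded g N.
apply: (@subseries_converges_abs_bounded R _ _ (2 + \sum_(i < k) `|a i|)) => m.
under eq_bigl => i do rewrite /sparse_set /= asboolb.
exact: sparse_abs_sum_bounded ha hN hk m.
Qed.

Theorem mainTheorem15 (R : realType) :
  same_min_card (ss_family R) dominating_family /\
  same_min_card (ss_perp_family R) unbounded_family.
Proof.
split; split.
- move=> D hD; exists (sparse_set @` D); last exact: card_image_le.
  split=> [_ [g _ <-]|a [ha _]]; first exact: inf_coinf_sparse_set.
  have [g Dg hg] := hD (decay_index a).
  by exists (sparse_set g); [exists g | exact: sparse_subseries_converges].
- move=> XX [hXX hc]; exists (square_count_point @` XX); last exact: card_image_le.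
  move=> f; have [X XXX hX] := hc _ (S_ui_block_harmonic f).
  exists (square_count_point X); first by exists X.
  exact: le_star_square_count_point (hXX _ XXX).1 hX.
- move=> B hB; exists (block_harmonic @` B); last exact: card_image_le.
  split=> [_ [f _ <-]|[X [hX hall]]]; first exact: S_ui_block_harmonic.
  have [f Bf hf] := hB (square_count_point X).
  by apply: hf; apply: le_star_square_count_point hX.1 (hall _ _); exists f.
- move=> A [hA hn]; exists (decay_index @` A); last exact: card_image_le.
  move=> g; apply: contrapT => hno; apply: hn.
  exists (sparse_set g); split=> [|a Aa]; first exact: inf_coinf_sparse_set.
  apply: sparse_subseries_converges; first exact: (hA _ Aa).1.
  by apply: contrapT => hl; apply: hno; exists (decay_index a) => //; exists a.
Qed.
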